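(* Let $d\ge1$. Then $\mathcal U(H(d,2))$ is isomorphic to the one-object groupoid $\{\ast\}/\!/(\mathbb Z/2\mathbb Z)$ (one object $\ast$, two morphisms $0=\mathrm{id}_\ast$ and $1$), and under this identification $\varpi(H(d,2))=(\bar\lambda,s_1)$ is given by $\bar\lambda(x)=\ast$ for objects $x$, $\bar\lambda((g,x))=\sum_{i=1}^d g_i\in\mathbb Z/2\mathbb Z$ for morphisms $(g,x)$, and $s_1(a)=a\bmod 2$ for $a\in\{0,1,\dots,d\}$. Consequently, for every category $\mathcal C$ every morphism-colored functor from $H(d,2)$ to $(\mathcal C,\mathrm{id})$ factors uniquely through this morphism-colored functor to $(\{\ast\}/\!/(\mathbb Z/2\mathbb Z),\mathrm{id})$, and for all positive integers $d,d'$ there is a one-to-one correspondence between morphism-colored functors $H(d,2)\to(\mathcal C,\mathrm{id})$ and morphism-colored functors $H(d',2)\to(\mathcal C,\mathrm{id})$.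
   Context: A morphism-colored category is a pair $(\mathcal C,\lambda)$ where $\mathcal C$ is a category and $\lambda$ assigns to each morphism $f$ a color $\lambda(f)$, such that whenever $\lambda(g)=\lambda(f_1\circ f_2)$ there exist composable $g_1,g_2$ with $g=g_1\circ g_2$, $\lambda(g_i)=\lambda(f_i)$. $(\mathcal C,\mathrm{id})$ (each morphism colored by itself) is the discrete morphism-colored category. A morphism-colored functor $(F,\gamma):(\mathcal C,\lambda)\to(\mathcal C',\lambda')$ is a functor $F$ with a map $\gamma$ on colors such that $\gamma(\lambda(f))=\lambda'(F(f))$ for all morphisms $f$; composition is componentwise. For a small morphism-colored groupoid $(\mathcal G,\lambda)$ with $\lambda(f)=\lambda(g)\Rightarrow\lambda(f^{-1})=\lambda(g^{-1})$: $I_1=\lambda(\mathrm{Mor}\,\mathcal G)$, $\lambda_1$ the corestriction; $I_0=\{\lambda(\mathrm{id}_x)\}$, $\lambda_0(x)=\lambda(\mathrm{id}_x)$; $\overset{1}{\sim}$ on $I_1$ relates $\lambda(f_1\circ\cdots\circ f_l)$ and $\lambda(g_1\circ\cdots\circ g_l)$ for composable sequences with $\lambda(f_i)=\lambda(g_i)$ for all $i$ (an equivalence relation), with quotient $s_1:I_1\to\bar I_1$; $\overset{0}{\sim}$ on $I_0$ relates $\lambda_0(\mathrm{source} f)$, $\lambda_0(\mathrm{source} g)$ whenever $s_1\lambda_1(f)=s_1\lambda_1(g)$, with quotient $s_0:I_0\to\bar I_0$. $\mathcal U(\mathcal G,\lambda)$ is the groupoid with objects $\bar I_0$, morphisms $\bar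 I_1$, source/target of $s_1\lambda_1(f)$ being $s_0\lambda_0$ of source/target of $f$, composition $s_1\lambda_1(f)\circ s_1\lambda_1(g)=s_1\lambda_1(f\circ g)$; $\bar\lambda:\mathcal G\to\mathcal U(\mathcal G,\lambda)$ is $x\mapsto s_0\lambda_0(x)$, $f\mapsto s_1\lambda_1(f)$, and $\varpi(\mathcal G,\lambda)=(\bar\lambda,s_1)$. Hamming schemoid: let $G=(\mathbb Z/n\mathbb Z)^d$ and $w(x)=\#\{i:x_i\neq0\}$ the Hamming weight. $G/\!/G$ is the action groupoid: objects $G$, morphisms $G\times G$, where $(g,x)$ has source $x$ and target $g+x$, composition $(h,g+x)\circ(g,x)=(h+g,x)$, identity $(0,x)$, inverse $(g,x)^{-1}=(-g,g+x)$. Let $\pi(g,x)=g$. Then $H(d,n)=(G/\!/G,\,w\circ\pi)$, with colors in $\{0,\dots,d\}$. *)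

From HB Require Import structures.
From mathcomp Require Import all_boot all_order all_algebra.
Set Implicit Arguments. Unset Strict Implicit. Unset Printing Implicit Defensive.
Import GRing.Theory.
Local Open Scope ring_scope.

(* mcomp f g stands for f \o g and is only meaningful when msrc f = mtgt g. *)
Record catD := CatD {
  Ob : Type; Mo : Type;
  msrc : Mo -> Ob; mtgt : Mo -> Ob;
  idm : Ob -> Mo; mcomp : Mo -> Mo -> Mo }.

Definition is_cat (C : catD) : Prop :=
  (forall x : Ob C, msrc (idm x) = x /\ mtgt (idm x) = x) /\
  (forall f g : Mo C, msrc f = mtgt g ->
      msrc (mcomp f g) = msrc g /\ mtgt (mcomp f g) = mtgt f) /\
  (forall f : Mo C, mcomp (idm (mtgt f)) f = f /\ mcomp f (idm (msrc f)) = f) /\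
  (forall f g h : Mo C, msrc f = mtgt g -> msrc g = mtgt h ->
      mcomp f (mcomp g h) = mcomp (mcomp f g) h).

Record functorD (C D : catD) := FunctorD {
  fob : Ob C -> Ob D; fmo : Mo C -> Mo D }.

Definition is_functor (C D : catD) (F : functorD C D) : Prop :=
  (forall f, msrc (fmo F f) = fob F (msrc f)) /\
  (forall f, mtgt (fmo F f) = fob F (mtgt f)) /\
  (forall x, fmo F (idm x) = idm (fob F x)) /\
  (forall f g, msrc f = mtgt g -> fmo F (mcomp f g) = mcomp (fmo F f) (fmo F g)).

Record ccat := CCat { ccat_cat :> catD; Col : Type; lam : Mo ccat_cat -> Col }.

Definition disc (C : catD) : ccat := @CCat C (Mo C) (fun f => f).

Record mcfunD (X Y : ccat) := MCFunD {
  mcF : functorD X Y; mcG : Col X -> Col Y }.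

Definition is_mcfun (X Y : ccat) (P : mcfunD X Y) : Prop :=
  is_functor (mcF P) /\ forall f, mcG P (lam f) = lam (fmo (mcF P) f).

Definition mcf_comp (X Y Z : ccat) (Q : mcfunD Y Z) (P : mcfunD X Y) : mcfunD X Z :=
  MCFunD (FunctorD (fun x => fob (mcF Q) (fob (mcF P) x))
                   (fun f => fmo (mcF Q) (fmo (mcF P) f)))
         (fun c => mcG Q (mcG P c)).

Fixpoint ccomp (C : catD) (f : Mo C) (fs : seq (Mo C)) : Mo C :=
  match fs with [::] => f | g :: gs => mcomp f (ccomp g gs) end.

Fixpoint chain (C : catD) (f : Mo C) (fs : seq (Mo C)) : Prop :=
  match fs with [::] => True | g :: gs => msrc f = mtgt g /\ chain g gs end.

Definition sim1 (X : ccat) (a b : Col X) : Prop :=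
  exists (f : Mo X) fs (g : Mo X) gs,
    chain f fs /\ chain g gs /\ lam f = lam g /\
    map (@lam X) fs = map (@lam X) gs /\
    a = lam (ccomp f fs) /\ b = lam (ccomp g gs).

Definition Gd (d : nat) := {ffun 'I_d -> 'Z_2}.
Definition hw (d : nat) (x : Gd d) : nat := #|[set i | x i != 0]|.

Definition Hcat (d : nat) : catD :=
  @CatD (Gd d) (Gd d * Gd d)
        (fun f => f.2) (fun f => f.1 + f.2)
        (fun x => (0, x))
        (fun f g => (f.1 + g.1, g.2)).

Definition H2 (d : nat) : ccat :=
  @CCat (Hcat d) 'I_d.+1 (fun f => inord (hw f.1)).

Definition Z2cat : catD :=
  @CatD unit 'Z_2 (fun _ => tt) (fun _ => tt) (fun _ => 0) (fun a b => a + b).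

Definition s1 (d : nat) (a : 'I_d.+1) : 'Z_2 := inZp a.

Definition varpi (d : nat) : mcfunD (H2 d) (disc Z2cat) :=
  @MCFunD (H2 d) (disc Z2cat) (FunctorD (C := Hcat d) (D := Z2cat) (fun _ => tt)
                   (fun f => @s1 d (inord (hw f.1))))
         (fun a : 'I_d.+1 => s1 a).

From HB Require Import structures.
From mathcomp Require Import all_boot all_order all_algebra zify.
From Stdlib Require Import FunctionalExtensionality ProofIrrelevance.
Import GRing.Theory.
Local Open Scope ring_scope.

Set Implicit Arguments.
Unset Strict Implicit.

(* The colour of (g, x) in H(d,2) is the Hamming weight of g, and s_1 reads it
   mod 2, i.e. as the sum of the coordinates of g in Z/2Z; hence s_1 is additive
   along composition, so colours of the same parity are never separated by ~1.
   Conversely, two weights of the same parity k <= k + 2i are ~1-related: with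
   u the indicator of [0, k+i) and w, v the indicators of the disjoint blocks
   [k, k+i), [k+i, k+2i), the chains (u,w) o (w,0) and (u,v) o (v,0) have
   factorwise equal colours k+i and i, while their composites have weights k
   and k+2i.  A morphism-coloured functor into a discrete category is constant
   on ~1-classes of colours, hence factors uniquely through varpi. *)

Lemma Z2_cases (z : 'Z_2) : z = 0 \/ z = 1.
Proof. by case: z => [[|[|m]]] // Hm; [left|right]; apply/val_inj. Qed.

Lemma Z2_addxx (z : 'Z_2) : z + z = 0.
Proof. by case: (Z2_cases z) => ->; apply/val_inj. Qed.

Lemma Z2_nat_neq0 (z : 'Z_2) : (z != 0)%:R = z.
Proof. by case: (Z2_cases z) => ->; apply/val_inj. Qed.

Lemma Z2_val_le1 (z : 'Z_2) : (val z <= 1)%N.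
Proof. by case: (Z2_cases z) => ->. Qed.

Lemma Gd_addxx d (x : Gd d) : x + x = 0.
Proof. by apply/ffunP => i; rewrite !ffunE Z2_addxx. Qed.

Lemma hw_le d (x : Gd d) : (hw x <= d)%N.
Proof. by apply: leq_trans (max_card _) _; rewrite card_ord. Qed.

Lemma s1_inord d (n : nat) : (n <= d)%N -> s1 (inord n : 'I_d.+1) = n%:R.
Proof. by move=> h; rewrite /s1 inordK // Zp_nat. Qed.

Lemma s1_hw d (x : Gd d) : s1 (inord (hw x) : 'I_d.+1) = \sum_(i < d) x i.
Proof.
rewrite s1_inord ?hw_le // /hw -sum1_card big_mkcond /= natr_sum.
by apply: eq_bigr => i _; rewrite inE -[RHS]Z2_nat_neq0; case: (x i != 0).
Qed.

Lemma card_ord_interval d lo hi : (lo <= hi <= d)%N ->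
  #|[set i : 'I_d | lo <= i < hi]%N| = (hi - lo)%N.
Proof.
case/andP=> hlo hd; rewrite -sum1_card big_mkcond /=.
under eq_bigr do rewrite inE.
rewrite -(big_mkord xpredT (fun i => if (lo <= i < hi)%N then 1%N else 0%N)).
rewrite (big_cat_nat _ hd) //= [X in (_ + X)%N]big1_seq ?addn0; last first.
  by move=> i /andP[_]; rewrite mem_index_iota => /andP[hi_i _]; rewrite ltnNge hi_i andbF.
rewrite (big_cat_nat _ hlo) //= big1_seq ?add0n; last first.
  by move=> i /andP[_]; rewrite mem_index_iota => /andP[_ i_lo]; rewrite leqNgt i_lo.
rewrite -[RHS]muln1 -sum_nat_const_nat; apply: eq_big_seq => i.
by rewrite mem_index_iota => ->.
Qed.

Definition interval_vec d (lo hi : nat) : Gd d := [ffun k : 'I_d => (lo <= k < hi)%N%:R].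

Lemma hw_interval_vec d lo hi : (lo <= hi <= d)%N -> hw (interval_vec d lo hi) = (hi - lo)%N.
Proof.
move=> h; rewrite -(card_ord_interval h); apply: eq_card => k.
by rewrite !inE ffunE; case: (_ && _).
Qed.

Lemma interval_vecD d lo mid hi : (lo <= mid <= hi)%N ->
  interval_vec d lo mid + interval_vec d mid hi = interval_vec d lo hi.
Proof.
case/andP=> h1 h2; apply/ffunP => k; rewrite !ffunE.
case: (ltnP k lo) => [k_lo | lo_k] /=.
  by rewrite leqNgt (leq_trans k_lo h1) add0r.
case: (ltnP k mid) => [k_mid | mid_k] /=; last by rewrite add0r.
by rewrite (leq_trans k_mid h2) addr0.
Qed.

Lemma ccomp_tgt (C : catD) (g : Mo C) gs : is_cat C -> chain g gs ->
  mtgt (ccomp g gs) = mtgt g.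
Proof.
move=> [_ [Hcomp _]]; elim: gs g => [//|h hs IH] g /= [e ch].
by have [_ ->] := Hcomp g (ccomp h hs) (etrans e (esym (IH h ch))).
Qed.

Lemma fmo_ccomp (C D : catD) (F : functorD C D) (f : Mo C) fs :
  is_cat C -> is_functor F -> chain f fs ->
  fmo F (ccomp f fs) = ccomp (fmo F f) (map (fmo F) fs).
Proof.
move=> HC [_ [_ [_ Fcomp]]]; elim: fs f => [//|g gs IH] f /= [e ch].
by rewrite Fcomp ?IH // (ccomp_tgt HC ch).
Qed.

Lemma sim1_sym (X : ccat) (a b : Col X) : sim1 a b -> sim1 b a.
Proof. by move=> [f [fs [g [gs [? [? [? [? [? ?]]]]]]]]]; exists g, gs, f, fs. Qed.

Lemma mcfun_sim1 (X : ccat) (C : catD) (P : mcfunD X (disc C)) (a b : Col X) :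
  is_cat X -> is_mcfun P -> sim1 a b -> mcG P a = mcG P b.
Proof.
move=> HX [HF HP] [f [fs [g [gs [cf [cg [e1 [e2 [-> ->]]]]]]]]].
have col_fmo h : fmo (mcF P) h = mcG P (lam h) by rewrite HP.
have map_fmo s : map (fmo (mcF P)) s = map (mcG P) (map (@lam X) s).
  by rewrite -map_comp; apply: eq_map.
by rewrite !HP /= !(fmo_ccomp HX HF) // !col_fmo !map_fmo e1 e2.
Qed.

Lemma mcfun_fob_const (X : ccat) (C : catD) (P : mcfunD X (disc C)) (x y : Ob X) :
  is_cat C -> is_mcfun P -> lam (idm x) = lam (idm y) -> fob (mcF P) x = fob (mcF P) y.
Proof.
move=> [Cid _] [[_ [_ [Pid _]]] HP] e.
rewrite -(proj1 (Cid (fob (mcF P) x))) -(proj1 (Cid (fob (mcF P) y))) -!Pid.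
by rewrite -[fmo _ (idm x)]HP -[fmo _ (idm y)]HP e.
Qed.

Lemma mcf_comp_mcfun (X Y Z : ccat) (Q : mcfunD Y Z) (P : mcfunD X Y) :
  is_mcfun Q -> is_mcfun P -> is_mcfun (mcf_comp Q P).
Proof.
move=> [[Qs [Qt [Qi Qc]]] QG] [[Ps [Pt [Pi Pc]]] PG].
split; first (split; [|split; [|split]]) => /=.
- by move=> f; rewrite Qs Ps.
- by move=> f; rewrite Qt Pt.
- by move=> x; rewrite Pi Qi.
- by move=> f g e; rewrite Pc // Qc // Ps Pt e.
- by move=> f; rewrite /mcf_comp /= PG QG.
Qed.

Lemma mcfunD_eta (X Y : ccat) (P : mcfunD X Y) :
  P = MCFunD (FunctorD (fob (mcF P)) (fmo (mcF P))) (mcG P).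
Proof. by case: P => [[]]. Qed.

Section Hamming.

Variable d : nat.

Lemma Hcat_is_cat : is_cat (Hcat d).
Proof.
split; [|split; [|split]] => /=.
- by move=> x; rewrite add0r.
- by move=> f g ->; rewrite addrA.
- by move=> [g x]; rewrite add0r addr0.
- by move=> f g h _ _; rewrite addrA.
Qed.

Lemma s1_lam (f : Mo (H2 d)) : s1 (lam f) = \sum_(i < d) f.1 i.
Proof. exact: s1_hw. Qed.

Lemma s1_lam_comp (f g : Mo (H2 d)) : s1 (lam (mcomp f g)) = s1 (lam f) + s1 (lam g).
Proof. by rewrite !s1_lam -big_split; apply: eq_bigr => i _; rewrite ffunE. Qed.

Lemma s1_lam_idm (x : Ob (H2 d)) : s1 (lam (idm x)) = 0.
Proof. by rewrite s1_lam big1 // => i _; rewrite ffunE. Qed.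

Lemma s1_lam_ccomp (f : Mo (H2 d)) fs :
  s1 (lam (ccomp f fs)) = s1 (lam f) + \sum_(c <- map (@lam (H2 d)) fs) s1 c.
Proof.
elim: fs f => [|g gs IH] f /=; first by rewrite big_nil addr0.
by rewrite s1_lam_comp IH big_cons addrA.
Qed.

Lemma sim1_s1 (a b : Col (H2 d)) : sim1 a b -> s1 a = s1 b.
Proof. by move=> [f [fs [g [gs [_ [_ [e1 [e2 [-> ->]]]]]]]]]; rewrite !s1_lam_ccomp e1 e2. Qed.

Lemma s1_sim1_leq (a b : 'I_d.+1) : (a <= b)%N -> s1 a = s1 b -> @sim1 (H2 d) a b.
Proof.
move=> hab /(congr1 val) hmod; have {}hmod : (a %% 2 = b %% 2)%N := hmod.
set k := nat_of_ord a; set i := ((b - a) %/ 2)%N.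
have hb : nat_of_ord b = (k + i + i)%N by rewrite /k /i; lia.
have hd : (k + i + i <= d)%N by rewrite -hb -ltnS ltn_ord.
pose u := interval_vec d 0 (k + i).
pose w := interval_vec d k (k + i).
pose v := interval_vec d (k + i) (k + i + i).
have hw_inord (x : Gd d) : nat_of_ord (inord (hw x) : 'I_d.+1) = hw x by rewrite inordK ?ltnS ?hw_le.
exists ((u, w) : Mo (H2 d)), [:: ((w, 0) : Mo (H2 d))],
       ((u, v) : Mo (H2 d)), [:: ((v, 0) : Mo (H2 d))].
split; first by rewrite /= addr0.
split; first by rewrite /= addr0.
split; first by [].
split.
  by congr [:: _]; apply: val_inj; rewrite /= !hw_inord !hw_interval_vec; lia.
split; apply: val_inj; rewrite /= hw_inord.
- rewrite /u /w -(@interval_vecD d 0 k (k + i)) ?leq_addr // -addrA Gd_addxx addr0.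
  by rewrite hw_interval_vec; lia.
- by rewrite interval_vecD ?hw_interval_vec ?hb; lia.
Qed.

Lemma sim1_iff (a b : 'I_d.+1) : @sim1 (H2 d) a b <-> s1 a = s1 b.
Proof.
split; first exact: sim1_s1.
case: (leqP a b) => h e; first exact: s1_sim1_leq.
by apply/sim1_sym/s1_sim1_leq => //; exact: ltnW.
Qed.

Lemma varpi_mcfun : is_mcfun (varpi d).
Proof.
do 4!split => //=.
- by move=> x; rewrite s1_hw big1 // => i _; rewrite ffunE.
- by move=> f g _; rewrite !s1_hw -big_split; apply: eq_bigr => i _; rewrite ffunE.
Qed.

Variable C : catD.
Hypothesis C_is_cat : is_cat C.

Lemma mcfun_s1 (P : mcfunD (H2 d) (disc C)) (a b : 'I_d.+1) :
  is_mcfun P -> s1 a = s1 b -> mcG P a = mcG P b.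
Proof. by move=> HP /sim1_iff; apply: mcfun_sim1 => //; exact: Hcat_is_cat. Qed.

Hypothesis d_gt0 : (0 < d)%N.

Definition Z2_lift (z : 'Z_2) : Mo (H2 d) := (interval_vec d 0 (val z), 0).

Lemma s1_lam_Z2_lift (z : 'Z_2) : s1 (lam (Z2_lift z)) = z.
Proof.
have z_le_d := leq_trans (Z2_val_le1 z) d_gt0.
by rewrite /= hw_interval_vec ?z_le_d // subn0 s1_inord ?natr_Zp.
Qed.

Definition varpi_factor (P : mcfunD (H2 d) (disc C)) : mcfunD (disc Z2cat) (disc C) :=
  @MCFunD (disc Z2cat) (disc C)
    (@FunctorD Z2cat C (fun _ => fob (mcF P) 0) (fun z => mcG P (lam (Z2_lift z))))
    (fun z => mcG P (lam (Z2_lift z))).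

Lemma varpi_factor_fmo (P : mcfunD (H2 d) (disc C)) (f : Mo (H2 d)) z :
  is_mcfun P -> s1 (lam f) = z -> fmo (mcF (varpi_factor P)) z = fmo (mcF P) f.
Proof.
move=> HP <-; rewrite -[RHS](proj2 HP f).
by apply: mcfun_s1; rewrite ?s1_lam_Z2_lift.
Qed.

Lemma varpi_factor_mcfun (P : mcfunD (H2 d) (disc C)) :
  is_mcfun P -> is_mcfun (varpi_factor P).
Proof.
move=> HP; have [[Ps [Pt [Pi Pc]]] _] := HP.
have fmo_lift z := varpi_factor_fmo HP (s1_lam_Z2_lift z).
have fob_P x : fob (mcF P) x = fob (mcF P) 0 by apply: mcfun_fob_const.
split => //; split; [|split; [|split]].
- by move=> z; rewrite fmo_lift Ps fob_P.
- by move=> z; rewrite fmo_lift Pt fob_P.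
- by move=> x; rewrite (varpi_factor_fmo HP (s1_lam_idm 0)) Pi.
- move=> z w _; pose f : Mo (H2 d) := ((Z2_lift z).1, (Z2_lift w).1).
  have fz : s1 (lam f) = z by exact: s1_lam_Z2_lift.
  have fw_comp : msrc (c := H2 d) f = mtgt (c := H2 d) (Z2_lift w) by rewrite /= addr0.
  rewrite (varpi_factor_fmo HP fz) (fmo_lift w) -Pc //.
  apply: (varpi_factor_fmo (f := mcomp (c := H2 d) f (Z2_lift w)) HP).
  by rewrite s1_lam_comp fz s1_lam_Z2_lift.
Qed.

Lemma varpi_factorK (P : mcfunD (H2 d) (disc C)) :
  is_mcfun P -> mcf_comp (varpi_factor P) (varpi d) = P.
Proof.
move=> HP; rewrite [RHS]mcfunD_eta; congr (MCFunD (FunctorD _ _) _);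
  apply: functional_extensionality.
- by move=> x; apply: (mcfun_fob_const C_is_cat HP).
- by move=> f; apply: varpi_factor_fmo.
- by move=> c; apply: mcfun_s1; rewrite ?s1_lam_Z2_lift.
Qed.

Lemma varpi_factor_unique (P : mcfunD (H2 d) (disc C)) (Q : mcfunD (disc Z2cat) (disc C)) :
  is_mcfun Q -> mcf_comp Q (varpi d) = P -> varpi_factor P = Q.
Proof.
move=> HQ <-; rewrite [RHS]mcfunD_eta; congr (MCFunD (FunctorD _ _) _);
  apply: functional_extensionality => /=.
- by case.
- by move=> z; rewrite s1_lam_Z2_lift; apply: (proj2 HQ z).
- by move=> z; rewrite s1_lam_Z2_lift.
Qed.

Lemma varpi_universal (P : mcfunD (H2 d) (disc C)) : is_mcfun P ->
  exists! Q : mcfunD (disc Z2cat) (disc C), is_mcfun Q /\ mcf_comp Q (varpi d) = P.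
Proof.
move=> HP; exists (varpi_factor P); split.
  by split; [exact: varpi_factor_mcfun | exact: varpi_factorK].
by move=> Q [HQ e]; exact: varpi_factor_unique.
Qed.

End Hamming.

Definition H2_mcfun (d : nat) (C : catD) := {P : mcfunD (H2 d) (disc C) | is_mcfun P}.

Definition H2_mcfun_transport (C : catD) (HC : is_cat C) (d d' : nat) (hd : (0 < d)%N)
  (P : H2_mcfun d C) : H2_mcfun d' C :=
  exist _ (mcf_comp (varpi_factor (sval P)) (varpi d'))
          (mcf_comp_mcfun (varpi_factor_mcfun HC hd (svalP P)) (varpi_mcfun d')).

Lemma H2_mcfun_transportK (C : catD) (HC : is_cat C) (d d' : nat)
  (hd : (0 < d)%N) (hd' : (0 < d')%N) :
  cancel (H2_mcfun_transport HC d' hd) (H2_mcfun_transport HC d hd').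
Proof.
move=> [P HP]; apply: eq_sig_hprop => [? ? ?|/=]; first exact: proof_irrelevance.
rewrite (varpi_factor_unique hd' (varpi_factor_mcfun HC hd HP) erefl).
exact: varpi_factorK.
Qed.

Unset Implicit Arguments.

Theorem proposition4p3 (d : nat) (hd : (0 < d)%N) :
  (forall a b : Col (H2 d), (exists f, lam f = a) -> (exists f, lam f = b) ->
      (sim1 a b <-> s1 a = s1 b)) /\
  (forall z : 'Z_2, exists f : Mo (H2 d), s1 (lam f) = z) /\
  (forall x y : Ob (H2 d), lam (idm x) = lam (idm y)) /\
  (forall f g : Mo (H2 d), msrc f = mtgt g ->
      s1 (lam (mcomp f g)) = s1 (lam f) + s1 (lam g)) /\
  (forall x : Ob (H2 d), s1 (lam (idm x)) = 0) /\
  is_mcfun (varpi d) /\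
  (forall f : Mo (H2 d), fmo (mcF (varpi d)) f = \sum_(i < d) f.1 i) /\
  (forall C : catD, is_cat C ->
     forall P : mcfunD (H2 d) (disc C), is_mcfun P ->
       exists! Q : mcfunD (disc Z2cat) (disc C),
         is_mcfun Q /\ mcf_comp Q (varpi d) = P) /\
  (forall C : catD, is_cat C -> forall d' : nat, (0 < d')%N ->
     exists (phi : {P : mcfunD (H2 d) (disc C) | is_mcfun P} ->
                   {P : mcfunD (H2 d') (disc C) | is_mcfun P})
            (psi : {P : mcfunD (H2 d') (disc C) | is_mcfun P} ->
                   {P : mcfunD (H2 d) (disc C) | is_mcfun P}),
       cancel phi psi /\ cancel psi phi).
Proof.
split; first by move=> a b _ _; exact: sim1_iff.
split; first by move=> z; exists (Z2_lift d z); exact: s1_lam_Z2_lift.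
split; first by [].
split; first by move=> f g _; exact: s1_lam_comp.
split; first exact: s1_lam_idm.
split; first exact: varpi_mcfun.
split; first exact: s1_lam.
split; first by move=> C HC P; exact: varpi_universal.
move=> C HC d' hd'.
exists (H2_mcfun_transport HC d' hd), (H2_mcfun_transport HC d hd').
by split; apply: H2_mcfun_transportK.
Qed.
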